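(* Let $\mathcal X$ be a set of $n\ge3$ items and let $\mathcal C$ be the collection of all subsets of $\mathcal X$ of even size at least 2, so that $d=\sum_{C\in\mathcal C}|C|=n2^{n-2}$. Then the comparison incidence graph $G_{\mathcal C}$ has a cycle decomposition $\sigma$ with $\mu(\sigma)\le5\log_2(n)$ and $\alpha(\sigma)\le5\log_2(n)$.
   Context: $G_{\mathcal C}$ is the bipartite graph with one node per item of $\mathcal X$ and one node per set $C\in\mathcal C$, with an edge between $x$ and $C$ iff $x\in C$. A cycle decomposition $\sigma$ is a partition of the edge set of $G_{\mathcal C}$ into edge-disjoint simple cycles $\sigma_1,\dots,\sigma_{|\sigma|}$; with $|\sigma_i|$ the number of edges of $\sigma_i$, $\mu(\sigma)=d/|\sigma|$ and $\alpha(\sigma)=\frac1d\sum_i|\sigma_i|^2$. *)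

From mathcomp Require Import all_boot.
From Stdlib Require Import Reals.
Set Implicit Arguments. Unset Strict Implicit. Unset Printing Implicit Defensive.

Definition Csets (n : nat) : {set {set 'I_n}} :=
  [set C : {set 'I_n} | ~~ odd #|C| & 2 <= #|C|].

(* Vertices of the bipartite incidence graph G_C: items (inl) and sets (inr).
   Sets outside Csets are isolated vertices (they are not in the graph). *)
Definition vert (n : nat) := ('I_n + {set 'I_n})%type.

Definition edge (n : nat) := ('I_n * {set 'I_n})%type.

Definition Gedges (n : nat) : {set edge n} :=
  [set e : edge n | (e.2 \in Csets n) && (e.1 \in e.2)].

Definition adj (n : nat) : rel (vert n) := fun u v =>
  match u, v with
  | inl x, inr C => (C \in Csets n) && (x \in C)
  | inr C, inl x => (C \in Csets n) && (x \in C)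
  | _, _ => false
  end.

Definition joins (n : nat) (e : edge n) (u v : vert n) : bool :=
  ((u == inl e.1) && (v == inr e.2)) || ((u == inr e.2) && (v == inl e.1)).

Definition simple_cycle (n : nat) (s : seq (vert n)) : bool :=
  [&& uniq s, 3 <= size s & cycle (@adj n) s].

Definition cycle_edges (n : nat) (s : seq (vert n)) : {set edge n} :=
  [set e : edge n | has (fun v => joins e v (next s v)) s].

Definition clen (n : nat) (s : seq (vert n)) : nat := #|cycle_edges s|.

Definition cycle_decomposition (n : nat) (sigma : seq (seq (vert n))) : Prop :=
  [/\ forall s, s \in sigma -> simple_cycle s,
      forall i j, (i < j < size sigma)%N ->
        [disjoint cycle_edges (nth [::] sigma i) & cycle_edges (nth [::] sigma j)]
    & \bigcup_(s <- sigma) cycle_edges s = Gedges n].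

Definition dtot (n : nat) : nat := \sum_(C in Csets n) #|C|.

Definition mu (n : nat) (sigma : seq (seq (vert n))) : R :=
  (INR (dtot n) / INR (size sigma))%R.

Definition alpha (n : nat) (sigma : seq (seq (vert n))) : R :=
  (/ INR (dtot n) * INR (\sum_(s <- sigma) (clen s) ^ 2))%R.

Definition log2 (x : R) : R := (ln x / ln 2)%R.

From mathcomp Require Import all_boot.
From Stdlib Require Import Reals.
From mathcomp Require Import zify.
From Stdlib Require Import Lra.
Set Implicit Arguments. Unset Strict Implicit. Unset Printing Implicit Defensive.

(* Each even set C is cut into the pairs formed by its 1st and 2nd, 3rd and
   4th, ... smallest elements.  If {a < b} is such a pair, toggling (symmetric
   difference with) a two-element set T lying entirely below a or entirely
   above b gives another even set C + T in which {a, b} is again a pair, and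
   the four edges joining a and b to C and C + T form a 4-cycle of G_C that
   C + T assigns to the same pair.  Taking T = {n-2, n-1} when b < n-2 and
   T = {0, 1} when a > 1 leaves only the sets {a, b} with a <= 1 and
   b >= n-2; their edges form a single cycle of length 6 (n = 3) or 8.  Every
   cycle thus has length at most L = 6 or 8, whence mu <= L and alpha <= L,
   and L <= 5 log2 n. *)

Lemma eq_set2 (T : finType) (x y z w : T) :
  ([set x; y] == [set z; w]) = ((x == z) && (y == w)) || ((x == w) && (y == z)).
Proof.
apply/eqP/idP => [/setP eqS | /orP[] /andP[/eqP-> /eqP->] //]; last by rewrite setUC.
move: (eqS x) (eqS y) (esym (eqS z)) (esym (eqS w)); rewrite !inE !eqxx ?orbT.
by do 4![move=> /esym/orP[] /eqP ?; subst]; rewrite !eqxx ?orbT.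
Qed.

Lemma eq_ord k (x y : 'I_k) : (x == y) = (val x == val y).
Proof. by []. Qed.

Lemma next_neq_prev (T : eqType) (s : seq T) x :
  uniq s -> 2 < size s -> x \in s -> next s x != prev s x.
Proof.
move=> us s3 /rot_to[i s' rot_s].
have s'2 : 1 < size s' by rewrite -ltnS -[(size s').+1]/(size (x :: s')) -rot_s size_rot.
have /andP[xs' us'] : uniq (x :: s') by rewrite -rot_s rot_uniq.
rewrite -(next_rot i us) -(prev_rot i us) rot_s prev_nth mem_head /= (memNindex xs').
case: s' s'2 xs' us' {rot_s} => [|y [|z s']] //= _ _ /andP[ys' _].
rewrite eqxx; apply: contraNneq ys' => ->.
by rewrite mem_nth.
Qed.

Section CyclesOfG.
Variable n : nat.
Implicit Types (s : seq (vert n)) (e : edge n) (x : 'I_n) (C : {set 'I_n}).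

Lemma eq_inl a b : (inl a == inl b :> vert n) = (a == b). Proof. by []. Qed.
Lemma eq_inr C D : (inr C == inr D :> vert n) = (C == D). Proof. by []. Qed.

Lemma joins_inl_inr e x C : joins e (inl x) (inr C) = (e == (x, C)).
Proof. by case: e => y D; rewrite /joins /= orbF xpair_eqE (eq_sym y) (eq_sym D). Qed.

Lemma joins_inr_inl e x C : joins e (inr C) (inl x) = (e == (x, C)).
Proof. by case: e => y D; rewrite /joins /= xpair_eqE andbC (eq_sym y) (eq_sym D). Qed.

Lemma cycle_edgesP e s :
  reflect (exists2 v, v \in s & joins e v (next s v)) (e \in cycle_edges s).
Proof. by rewrite inE; apply: hasP. Qed.

Lemma cycle_edges_vertices e s :
  e \in cycle_edges s -> (inl e.1 \in s) && (inr e.2 \in s).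
Proof.
case/cycle_edgesP => v vs; have ws : next s v \in s by rewrite mem_next.
by case/orP=> /andP[/eqP ev /eqP ew]; rewrite -ev -ew vs ws.
Qed.

Lemma simple_cycle_edges_sub s : simple_cycle s -> cycle_edges s \subset Gedges n.
Proof.
case/and3P=> _ _ cs; apply/subsetP => -[x C] /cycle_edgesP[v vs].
move: (next_cycle cs vs); case: v {vs} => [y|D]; case: (next s _) => [z|E] //=.
- by rewrite joins_inl_inr => adj_yE /eqP[-> ->]; rewrite inE.
- by rewrite joins_inr_inl => adj_Dz /eqP[-> ->]; rewrite inE.
Qed.

Definition edge_between (u v : vert n) : option (edge n) :=
  match u, v with inl x, inr C | inr C, inl x => Some (x, C) | _, _ => None end.

Lemma joins_edge_between e u v : joins e u v -> edge_between u v = Some e.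
Proof.
case: u => [x|C]; case: v => [y|D]; rewrite ?joins_inl_inr ?joins_inr_inl //.
- by rewrite /joins /= !andbF.
- by move=> /eqP->.
- by move=> /eqP->.
- by rewrite /joins /= !andbF.
Qed.

Lemma clen_le_size s : clen s <= size s.
Proof.
pose r := pmap (fun v => edge_between v (next s v)) s.
have sub : cycle_edges s \subset r.
  apply/subsetP => e /cycle_edgesP[v vs /joins_edge_between ev].
  by rewrite mem_pmap; apply/mapP; exists v.
apply: leq_trans (subset_leq_card sub) _.
by rewrite (leq_trans (card_size r)) // size_pmap count_size.
Qed.

(* A set with two elements on a simple cycle is entered from one and left
   towards the other, so the cycle uses both of its edges. *)
Lemma simple_cycle_card2_edges s C x :
  simple_cycle s -> inr C \in s -> #|C| = 2 -> x \in C -> (x, C) \in cycle_edges s.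
Proof.
case/and3P=> us s3 cs Cs C2 xC.
have := next_neq_prev us s3 Cs; have := prev_cycle cs Cs; have := next_cycle cs Cs.
have back : next s (prev s (inr C)) = inr C by rewrite next_prev.
have prev_s : prev s (inr C) \in s by rewrite mem_prev.
case: (prev s _) back prev_s => [y|//] back prev_s.
case next_C: (next s _) => [z|//] /= /andP[_ zC] /andP[_ yC] zy.
have /subset_cardP eqC : #|[set z; y]| = #|C| by rewrite cards2 zy.
have /eqC zyC : [set z; y] \subset C by apply/subsetP => t /set2P[]->.
rewrite -zyC in xC; apply/cycle_edgesP; case/set2P: xC => ->.
- by exists (inr C); rewrite // next_C joins_inr_inl.
- by exists (inl y); rewrite // back joins_inl_inr.
Qed.

Definition square a b C D : seq (vert n) := [:: inl a; inr C; inl b; inr D].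

Lemma square_edges a b C D e : a != b -> C != D ->
  (e \in cycle_edges (square a b C D)) = (e \in [:: (a, C); (b, C); (b, D); (a, D)]).
Proof.
move=> ab CD; rewrite inE /= /next /= !eqxx ?eq_inl ?eq_inr.
rewrite (eq_sym D) (negbTE CD) (eq_sym b) (negbTE ab).
by rewrite !joins_inl_inr !joins_inr_inl !inE orbF.
Qed.

Lemma simple_square a b C D : a != b -> C != D -> C \in Csets n -> D \in Csets n ->
  a \in C -> b \in C -> a \in D -> b \in D -> simple_cycle (square a b C D).
Proof.
move=> ab CD CC DC aC bC aD bD.
rewrite /simple_cycle /= !in_cons in_nil ?eq_inl ?eq_inr.
by rewrite (negbTE ab) (negbTE CD) CC DC aC bC aD bD.
Qed.

End CyclesOfG.

Lemma dtotE n : dtot n = #|Gedges n|.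
Proof.
rewrite -sum1_card big_mkcond /=.
have -> : \sum_(e : edge n) (if e \in Gedges n then 1 else 0) =
    \sum_(x : 'I_n) \sum_(C : {set 'I_n}) (if (C \in Csets n) && (x \in C) then 1 else 0).
  by rewrite pair_big /=; apply: eq_bigr => -[x C] _; rewrite inE.
rewrite exchange_big /dtot big_mkcond /=; apply: eq_bigr => C _.
case: (C \in Csets n); last by rewrite big1.
by rewrite -sum1_card big_mkcond.
Qed.

Lemma card_bigcup_seq (T : finType) (I : eqType) (r : seq I) (F : I -> {set T}) :
  uniq r -> {in r &, forall i j, i != j -> [disjoint F i & F j]} ->
  #|\bigcup_(i <- r) F i| = \sum_(i <- r) #|F i|.
Proof.
elim: r => [|i r IHr] /=; first by rewrite !big_nil cards0.
case/andP=> ir ur disj; rewrite !big_cons -IHr //; last first.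
  by move=> j k jr kr; apply: disj; rewrite inE ?jr ?kr orbT.
have : \bigcup_(j <- r) F j \subset ~: F i.
  rewrite big_seq; apply: (big_ind (fun B : {set T} => B \subset ~: F i)).
  - exact: sub0set.
  - by move=> A B AFi BFi; rewrite subUset AFi.
  - move=> j jr; rewrite -disjoints_subset disjoint_sym disj ?inE ?eqxx ?jr ?orbT //.
    by apply: contraNneq ir => ->.
rewrite -disjoints_subset disjoint_sym => /disjoint_setI0 Fi0.
by rewrite cardsU Fi0 cards0 subn0.
Qed.

Lemma sum_le_size_mul (I : eqType) (r : seq I) (g : I -> nat) (L : nat) :
  {in r, forall i, g i <= L} -> \sum_(i <- r) g i <= L * size r.
Proof.
move=> gL; rewrite big_seq (leq_trans (leq_sum r gL)) // -big_seq.
by rewrite big_const_seq count_predT iter_addn_0 mulnC.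
Qed.

Lemma sum_sq_le_mul_sum (I : eqType) (r : seq I) (g : I -> nat) (L : nat) :
  {in r, forall i, g i <= L} -> \sum_(i <- r) g i ^ 2 <= L * \sum_(i <- r) g i.
Proof.
move=> gL; rewrite big_distrr !big_seq; apply: leq_sum => i ir.
by rewrite Nat.pow_2_r multE leq_mul2r (gL i ir) orbT.
Qed.

Section CanonicalCycles.
Variables (n L : nat) (f : edge n -> seq (vert n)).
Hypothesis f_simple : forall e, e \in Gedges n -> simple_cycle (f e).
Hypothesis f_mem : forall e, e \in Gedges n -> e \in cycle_edges (f e).
Hypothesis f_const :
  forall e, e \in Gedges n -> forall e', e' \in cycle_edges (f e) -> f e' = f e.
Hypothesis f_clen : forall e, e \in Gedges n -> clen (f e) <= L.

Let sigma := undup [seq f e | e <- enum (Gedges n)].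

Lemma mem_canonical_cycles s : reflect (exists2 e, e \in Gedges n & s = f e) (s \in sigma).
Proof.
rewrite mem_undup; apply: (iffP mapP) => -[e]; first by rewrite mem_enum; exists e.
by exists e; rewrite ?mem_enum.
Qed.

Lemma canonical_cycles_disjoint : {in sigma &, forall s t, s != t ->
  [disjoint cycle_edges s & cycle_edges t]}.
Proof.
move=> _ _ /mem_canonical_cycles[e eG ->] /mem_canonical_cycles[e' e'G ->] ff'.
rewrite -setI_eq0; apply/eqP/setP => x; rewrite in_setI in_set0.
apply/negbTE/andP => -[xe xe'].
by move: ff'; rewrite -(f_const eG xe) -(f_const e'G xe') eqxx.
Qed.

Lemma canonical_cycles_cover : \bigcup_(s <- sigma) cycle_edges s = Gedges n.
Proof.
apply/eqP; rewrite eqEsubset; apply/andP; split.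
  rewrite big_seq; apply: (big_ind (fun B : {set edge n} => B \subset Gedges n)).
  - exact: sub0set.
  - by move=> A B; rewrite subUset => -> ->.
  - by move=> s /mem_canonical_cycles[e eG ->]; apply/simple_cycle_edges_sub/f_simple.
apply/subsetP => e eG; have fe : f e \in sigma by apply/mem_canonical_cycles; exists e.
by rewrite (big_rem _ fe) in_setU f_mem.
Qed.

Lemma canonical_cycles_decomposition : exists sigma : seq (seq (vert n)),
  [/\ cycle_decomposition sigma, dtot n <= L * size sigma
    & \sum_(s <- sigma) clen s ^ 2 <= L * dtot n].
Proof.
have us : uniq sigma := undup_uniq _.
have dtot_sum : dtot n = \sum_(s <- sigma) clen s.
  rewrite dtotE -canonical_cycles_cover card_bigcup_seq //.
  exact: canonical_cycles_disjoint.
have sigmaL : {in sigma, forall s, clen s <= L}.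
  by move=> _ /mem_canonical_cycles[e eG ->]; apply: f_clen.
exists sigma; split; last by rewrite dtot_sum sum_sq_le_mul_sum.
- split; last exact: canonical_cycles_cover.
  + by move=> _ /mem_canonical_cycles[e eG ->]; apply: f_simple.
  + move=> i j /andP[ij jsigma]; have isigma := ltn_trans ij jsigma.
    by apply: canonical_cycles_disjoint; rewrite ?mem_nth // nth_uniq // ltn_eqF.
- by rewrite dtot_sum sum_le_size_mul.
Qed.

End CanonicalCycles.

Lemma Rdiv_le_of_le_mul (a b c : R) : (0 < c)%R -> (a <= b * c)%R -> (a / c <= b)%R.
Proof.
by move=> c_pos abc; apply: (Rmult_le_reg_r c) => //; rewrite /Rdiv Rmult_assoc Rinv_l; lra.
Qed.

Lemma Rle_div_of_mul_le (a b c : R) : (0 < c)%R -> (a * c <= b)%R -> (a <= b / c)%R.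
Proof.
by move=> c_pos abc; apply: (Rmult_le_reg_r c) => //; rewrite /Rdiv Rmult_assoc Rinv_l; lra.
Qed.

Lemma ln_le (x y : R) : (0 < x)%R -> (x <= y)%R -> (ln x <= ln y)%R.
Proof. by move=> x_pos /Rle_lt_or_eq_dec[/(ln_increasing _ _ x_pos)|->]; lra. Qed.

Lemma mu_le n (sigma : seq (seq (vert n))) (L : nat) :
  dtot n <= L * size sigma -> (mu sigma <= INR L)%R.
Proof.
rewrite /mu; case: (posnP (size sigma)) => [-> | sigma_gt0 dL].
  by rewrite muln0 leqn0 => /eqP->; rewrite /Rdiv Rmult_0_l; apply: pos_INR.
apply: Rdiv_le_of_le_mul; first exact/lt_0_INR/ltP.
by rewrite -mult_INR; apply/le_INR/leP.
Qed.

Lemma alpha_le n (sigma : seq (seq (vert n))) (L : nat) :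
  \sum_(s <- sigma) clen s ^ 2 <= L * dtot n -> (alpha sigma <= INR L)%R.
Proof.
rewrite /alpha; case: (posnP (dtot n)) => [-> | d_gt0 sL].
  by rewrite muln0 leqn0 => /eqP->; rewrite Rmult_0_r; apply: pos_INR.
rewrite Rmult_comm; apply: Rdiv_le_of_le_mul; first exact/lt_0_INR/ltP.
by rewrite -mult_INR; apply/le_INR/leP; rewrite multE.
Qed.

Definition cycle_bound (m : nat) : nat := if m == 0 then 6 else 8.

Lemma cycle_bound_le_5log2 m : (INR (cycle_bound m) <= 5 * log2 (INR m.+3))%R.
Proof.
have ln2_pos : (0 < ln 2)%R by rewrite -ln_1; apply: ln_increasing; lra.
rewrite /log2 /Rdiv -Rmult_assoc; apply: Rle_div_of_mul_le => //.
rewrite /cycle_bound; case: m => [|m].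
- rewrite (_ : INR 3 = 3%R); last by rewrite /=; lra.
  have : (ln (2 ^ 6) <= ln (3 ^ 5))%R by apply: ln_le; lra.
  by rewrite !ln_pow /=; lra.
- have : (ln (2 ^ 2) <= ln (INR m.+4))%R.
    by apply: ln_le; rewrite ?S_INR; have := pos_INR m; lra.
  by rewrite ln_pow /=; lra.
Qed.

Section ConsecutivePairs.
Variable n : nat.
Implicit Types (C T : {set 'I_n}) (a b t x z : 'I_n).

Definition symdiff C T := (C :\: T) :|: (T :\: C).

Lemma in_symdiff C T z : (z \in symdiff C T) = (z \in C) (+) (z \in T).
Proof. by rewrite !inE; case: (z \in C); case: (z \in T). Qed.

Lemma symdiffK C T : symdiff (symdiff C T) T = C.
Proof. by apply/setP => z; rewrite !in_symdiff -addbA addbb addbF. Qed.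

Lemma odd_card_symdiff C T : odd #|symdiff C T| = odd #|C| (+) odd #|T|.
Proof.
have disj : (C :\: T) :&: (T :\: C) = set0.
  by apply/setP => z; rewrite !inE; case: (z \in C); case: (z \in T).
rewrite cardsU disj cards0 subn0 oddD -(cardsID T C) -(cardsID C T) setIC !oddD.
by rewrite addbACA addbb.
Qed.

Definition lower C x := [set z in C | z < x].

Definition upper C x := [set z in C | x < z].

Lemma card_lower_upper C x : x \in C -> #|C| = (#|lower C x| + #|upper C x|).+1.
Proof.
move=> xC; have splitC : C = x |: (lower C x :|: upper C x).
  apply/setP => z; rewrite !inE.
  case: (ltngtP z x) => [zx|xz|/val_inj->]; rewrite ?eqxx ?xC // -val_eqE.
  - by rewrite (ltn_eqF zx) andbT andbF orbF.
  - by rewrite (gtn_eqF xz) andbT andbF.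
have disj : lower C x :&: upper C x = set0.
  apply/setP => z; rewrite !inE; apply/negbTE/negP.
  by case/andP=> /andP[_ zx] /andP[_ /(ltn_trans zx)]; rewrite ltnn.
by rewrite {1}splitC cardsU1 cardsU disj cards0 subn0 !inE ltnn !andbF.
Qed.

Lemma lower_symdiff C T x : lower (symdiff C T) x = symdiff (lower C x) (lower T x).
Proof. by apply/setP => z; rewrite !inE; case: (z \in C); case: (z \in T); case: (z < x). Qed.

Definition adjacent C a b := [&& a \in C, b \in C, a < b & [forall z in C, ~~ (a < z < b)]].

(* C is split into the pairs of its 1st and 2nd, 3rd and 4th, ... elements. *)
Definition paired C a b := adjacent C a b && ~~ odd #|lower C a|.

Lemma card_lower_adjacent C a b : adjacent C a b -> #|lower C b| = #|lower C a|.+1.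
Proof.
case/and4P=> aC bC ab /forall_inP between.
suff -> : lower C b = a |: lower C a by rewrite cardsU1 inE ltnn andbF.
apply/setP => z; rewrite !inE.
case: (ltngtP z a) => [za|az|/val_inj->]; last by rewrite eqxx aC ab.
- by rewrite (ltn_trans za ab) -val_eqE (ltn_eqF za) andbT.
- rewrite -val_eqE (gtn_eqF az) andbF /=; apply/negbTE/andP => -[zC zb].
  by have := between z zC; rewrite az zb.
Qed.

Lemma adjacent_inj_r C a b b' : adjacent C a b -> adjacent C a b' -> b = b'.
Proof.
case/and4P=> _ bC ab /forall_inP nb /and4P[_ b'C ab' /forall_inP nb'].
case: (ltngtP b b') => [bb'|b'b|/val_inj//].
- by have := nb' b bC; rewrite ab bb'.
- by have := nb b' b'C; rewrite ab' b'b.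
Qed.

Lemma adjacent_inj_l C a a' b : adjacent C a b -> adjacent C a' b -> a = a'.
Proof.
case/and4P=> aC _ ab /forall_inP nb /and4P[a'C _ a'b /forall_inP nb'].
case: (ltngtP a a') => [aa'|a'a|/val_inj//].
- by have := nb a' a'C; rewrite aa' a'b.
- by have := nb' a aC; rewrite a'a ab.
Qed.

Lemma paired_uniq C a b a' b' x : paired C a b -> paired C a' b' ->
  x \in [set a; b] -> x \in [set a'; b'] -> (a, b) = (a', b').
Proof.
case/andP=> adj ev /andP[adj' ev'] /set2P[]-> /set2P[] e; rewrite -e in adj' ev' *.
- by rewrite (adjacent_inj_r adj adj').
- by move: ev; rewrite (card_lower_adjacent adj') /= ev'.
- by move: ev'; rewrite (card_lower_adjacent adj) /= ev.
- by rewrite (adjacent_inj_l adj adj').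
Qed.

Lemma adjacent_pred C x y : x \in C -> y \in lower C x -> exists w, adjacent C w x.
Proof.
move=> xC /(arg_maxnP (fun z : 'I_n => val z))[w w_low wmax].
have /[!inE] /andP[wC wx] : w \in lower C x by [].
exists w; apply/and4P; split => //; apply/forall_inP => z zC; apply/negP => /andP[wz zx].
have z_low : z \in lower C x by rewrite inE zC zx.
by move: (wmax z z_low) => /=; rewrite leqNgt wz.
Qed.

Lemma adjacent_succ C x y : x \in C -> y \in upper C x -> exists w, adjacent C x w.
Proof.
move=> xC /(arg_minnP (fun z : 'I_n => val z))[w w_up wmin].
have /[!inE] /andP[wC xw] : w \in upper C x by [].
exists w; apply/and4P; split => //; apply/forall_inP => z zC; apply/negP => /andP[xz zw].
have z_up : z \in upper C x by rewrite inE zC xz.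
by move: (wmin z z_up) => /=; rewrite leqNgt zw.
Qed.

Lemma paired_exists C x : ~~ odd #|C| -> x \in C ->
  exists a b, paired C a b /\ x \in [set a; b].
Proof.
move=> evC xC; case odd_x: (odd #|lower C x|).
  have [y y_low] : exists y, y \in lower C x.
    by apply/set0Pn; apply: contraTneq odd_x => ->; rewrite cards0.
  have [w adj] := adjacent_pred xC y_low; exists w, x; rewrite set22; split => //.
  by move: odd_x; rewrite /paired adj (card_lower_adjacent adj) /= => ->.
have [y y_up] : exists y, y \in upper C x.
  apply/set0Pn; apply: contraNneq evC => up0.
  by rewrite (card_lower_upper xC) up0 cards0 addn0 /= odd_x.
have [w adj] := adjacent_succ xC y_up; exists x, w; rewrite set21; split => //.
by rewrite /paired adj odd_x.
Qed.

Lemma paired_symdiff C T a b : paired C a b -> ~~ odd #|T| ->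
  {in T, forall t, t < a} \/ {in T, forall t, b < t} -> paired (symdiff C T) a b.
Proof.
case/andP=> /and4P[aC bC ab /forall_inP between] evC evT side.
have outside t : t \in T -> (t < a) || (b < t) by case: side => below /below ->; rewrite ?orbT.
have notT z : a <= z <= b -> z \notin T.
  by case/andP=> az zb; apply/negP => /outside; rewrite ltnNge az /= ltnNge zb.
have evT_a : ~~ odd #|lower T a|.
  case: side => side.
  - suff -> : lower T a = T by [].
    by apply/setP => t; rewrite inE andb_idr // => /side.
  - suff -> : lower T a = set0 by rewrite cards0.
    apply/setP => t; rewrite !inE; apply/negbTE/andP => -[/side bt ta].
    by have := ltn_trans ab bt; rewrite ltnNge ltnW.
apply/andP; split; last by rewrite lower_symdiff odd_card_symdiff (negbTE evC) (negbTE evT_a).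
have aT : a \notin T by apply: notT; rewrite leqnn (ltnW ab).
have bT : b \notin T by apply: notT; rewrite leqnn (ltnW ab).
apply/and4P; split => //; rewrite ?in_symdiff ?aC ?bC ?(negbTE aT) ?(negbTE bT) //.
apply/forall_inP => z; rewrite in_symdiff; apply: contraTN => /andP[az zb].
have zT : z \notin T by apply: notT; rewrite (ltnW az) (ltnW zb).
by rewrite (negbTE zT) addbF; apply/negP => /between; rewrite az zb.
Qed.

Lemma paired_set2 a b : a < b -> paired [set a; b] a b.
Proof.
move=> ab; rewrite /paired /adjacent !inE !eqxx orbT ab /=; apply/andP; split.
  by apply/forall_inP => z /set2P[]->; rewrite ltnn ?andbF.
suff -> : lower [set a; b] a = set0 by rewrite cards0.
apply/setP => z; rewrite !inE; apply/negbTE/andP => -[/orP[]/eqP-> za].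
  by rewrite ltnn in za.
by have := ltn_trans ab za; rewrite ltnn.
Qed.

Lemma paired_Csets C a b : paired C a b -> ~~ odd #|C| -> C \in Csets n.
Proof.
case/andP=> /and4P[aC bC ab _] _ evC; rewrite inE evC /=.
have ab' : a != b by rewrite -val_eqE ltn_eqF.
have <- : #|[set a; b]| = 2 by rewrite cards2 ab'.
by apply: subset_leq_card; apply/subsetP => z /set2P[]->.
Qed.

End ConsecutivePairs.

(* Of C and C toggled by [set t; t'], the set missing t is listed first, so
   that both sets give the same square. *)
Definition square_of n (t t' a b : 'I_n) (C : {set 'I_n}) : seq (vert n) :=
  let T := [set t; t'] in
  let D := if t \in C then symdiff C T else C in
  square a b D (symdiff D T).

Lemma square_of_symdiff n (t t' a b : 'I_n) C :
  square_of t t' a b (symdiff C [set t; t']) = square_of t t' a b C.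
Proof. by rewrite /square_of in_symdiff set21 addbT; case: (t \in C); rewrite ?symdiffK. Qed.

Section SquareOf.
Variables (n : nat) (t t' a b : 'I_n) (C : {set 'I_n}).
Let T := [set t; t'].
Hypotheses (pC : paired C a b) (pCT : paired (symdiff C T) a b).
Hypotheses (evC : ~~ odd #|C|) (evT : ~~ odd #|T|).

Lemma square_of_pair_neq : a != b.
Proof. by case/andP: pC => /and4P[_ _ ab _] _; rewrite -val_eqE ltn_eqF. Qed.

Lemma square_of_sets_neq : C != symdiff C T.
Proof. by apply/negP => /eqP/setP/(_ t); rewrite in_symdiff set21 addbT; case: (t \in C). Qed.

Lemma square_of_edges e : (e \in cycle_edges (square_of t t' a b C)) =
  (e.1 \in [set a; b]) && (e.2 \in [set C; symdiff C T]).
Proof.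
have [ab CT] := (square_of_pair_neq, square_of_sets_neq).
have TC : symdiff C T != C by rewrite eq_sym.
rewrite /square_of -/T; case: e => x S.
case: (t \in C); rewrite square_edges ?symdiffK // !inE !xpair_eqE /=.
all: by do 2!case: (x == _); do 2!case: (S == _).
Qed.

Lemma simple_square_of : simple_cycle (square_of t t' a b C).
Proof.
have [ab CT] := (square_of_pair_neq, square_of_sets_neq).
have evCT : ~~ odd #|symdiff C T| by rewrite odd_card_symdiff (negbTE evC).
have /andP[/and4P[aC bC _ _] _] := pC; have /andP[/and4P[aCT bCT _ _] _] := pCT.
have CC := paired_Csets pC evC; have CTC := paired_Csets pCT evCT.
have TC : symdiff C T != C by rewrite eq_sym.
by rewrite /square_of -/T; case: (t \in C); rewrite ?symdiffK; apply: simple_square.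
Qed.

End SquareOf.

Section Construction.
Variable m : nat.

(* Explicit ordinals, so that their values reduce by computation. *)
Definition lo0 : 'I_m.+3 := ord0.
Definition lo1 : 'I_m.+3 := Ordinal (isT : 1 < m.+3).
Definition hi0 : 'I_m.+3 := Ordinal (leqnSn m.+2).
Definition hi1 : 'I_m.+3 := ord_max.

Definition toggle_pair (a b : 'I_m.+3) : option ('I_m.+3 * 'I_m.+3) :=
  if b < m.+1 then Some (hi0, hi1) else if 1 < a then Some (lo0, lo1) else None.

Lemma toggle_pair_Some (a b t t' : 'I_m.+3) (C : {set 'I_m.+3}) :
  toggle_pair a b = Some (t, t') -> paired C a b ->
  paired (symdiff C [set t; t']) a b /\ ~~ odd #|[set t; t']|.
Proof.
move=> toggle pC; have /andP[/and4P[_ _ ab _] _] := pC.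
suff [tt' side] : t != t' /\ ({in [set t; t'], forall x : 'I_m.+3, x < a} \/
                               {in [set t; t'], forall x : 'I_m.+3, b < x}).
  have evT : ~~ odd #|[set t; t']| by rewrite cards2 tt'.
  by split => //; apply: paired_symdiff.
move: toggle; rewrite /toggle_pair; case: ifP => [bm [<- <-]|_].
  split; first by rewrite -val_eqE /= ltn_eqF.
  by right => x /set2P[]->; [exact: bm | exact: leqW].
case: ifP => // a1 [<- <-]; split => //.
by left => x /set2P[]->; [exact: ltnW | exact: a1].
Qed.

Lemma toggle_pair_None (a b : 'I_m.+3) : toggle_pair a b = None -> a <= 1 /\ m.+1 <= b.
Proof. by rewrite /toggle_pair; case: ltnP => // bm; case: ltnP. Qed.

(* The sets [set a; b] with a <= 1 and m.+1 <= b form their own single pair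
   and admit no toggle; they are covered by one hexagon (m = 0, where
   hi0 = lo1) or octagon. *)
Definition exceptional_cycle : seq (vert m.+3) :=
  if m == 0 then
    [:: inl lo0; inr [set lo0; lo1]; inl lo1; inr [set lo1; hi1]; inl hi1; inr [set lo0; hi1]]
  else
    [:: inl lo0; inr [set lo0; hi0]; inl hi0; inr [set lo1; hi0];
        inl lo1; inr [set lo1; hi1]; inl hi1; inr [set lo0; hi1]].

Lemma toggle_pair_exceptional (a b : 'I_m.+3) :
  a <= 1 -> m.+1 <= b -> toggle_pair a b = None.
Proof. by move=> a1 mb; rewrite /toggle_pair ltnNge mb /= ltnNge a1. Qed.

End Construction.

Lemma simple_exceptional_cycle m : simple_cycle (exceptional_cycle m).
Proof.
rewrite /exceptional_cycle /simple_cycle; case: m => [|p] /=.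
all: rewrite !in_cons !in_nil ?eq_inl ?eq_inr !eq_set2 !inE !cards2.
all: rewrite !eq_ord /=; lia.
Qed.

Lemma exceptional_cycle_sets m (S : {set 'I_m.+3}) : inr S \in exceptional_cycle m ->
  exists a b : 'I_m.+3, [/\ S = [set a; b], a < b, a <= 1 & m.+1 <= b].
Proof.
rewrite /exceptional_cycle; case: m S => [|p] S /=.
all: rewrite !in_cons !in_nil ?eq_inr /= ?orbF.
- by case/or3P=> /eqP->; do 2!eexists; split; first reflexivity.
- by case/or4P=> /eqP->; do 2!eexists; split; first reflexivity; rewrite /= ?leqnSn.
Qed.

Lemma exceptional_cycle_mem m (a b : 'I_m.+3) : a < b -> a <= 1 -> m.+1 <= b ->
  inr [set a; b] \in exceptional_cycle m.
Proof.
move=> ab a1 mb; have b2 := ltn_ord b.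
rewrite /exceptional_cycle; case: m a b ab a1 mb b2 => [|p] a b ab a1 mb b2 /=.
all: rewrite !in_cons !in_nil ?eq_inr !eq_set2 !eq_ord /=; lia.
Qed.

Lemma paired_exceptional m (C : {set 'I_m.+3}) (a b : 'I_m.+3) :
  paired C a b -> ~~ odd #|C| -> a <= 1 -> m.+1 <= b -> C = [set a; b].
Proof.
move=> /andP[adj ev_a] evC a1 mb; have /and4P[aC bC ab _] := adj.
have le1_even k : k <= 1 -> ~~ odd k -> k = 0 by case: k => [|[]].
have low0 : #|lower C a| = 0.
  apply: le1_even ev_a; rewrite -(cards1 (lo0 m)); apply: subset_leq_card.
  by apply/subsetP => z; rewrite !inE eq_ord /= => /andP[_ za]; lia.
have up0 : #|upper C b| = 0.
  apply: le1_even; last first.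
    by move: evC; rewrite (card_lower_upper bC) (card_lower_adjacent adj) low0 add1n /= negbK.
  rewrite -(cards1 (hi1 m)); apply: subset_leq_card.
  by apply/subsetP => z; rewrite !inE eq_ord /= => /andP[_ bz]; have := ltn_ord z; lia.
apply/esym/eqP; rewrite eqEcard cards2 -val_eqE ltn_eqF //=.
rewrite (card_lower_upper bC) (card_lower_adjacent adj) low0 up0 andbT.
by apply/subsetP => z /set2P[]->.
Qed.

Section PairCycles.
Variable m : nat.

Definition pair_cycle (a b : 'I_m.+3) (C : {set 'I_m.+3}) : seq (vert m.+3) :=
  if toggle_pair a b is Some (t, t') then square_of t t' a b C else exceptional_cycle m.

Definition edge_cycle (e : edge m.+3) : seq (vert m.+3) :=
  if [pick ab : 'I_m.+3 * 'I_m.+3 | paired e.2 ab.1 ab.2 & e.1 \in [set ab.1; ab.2]]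
    is Some (a, b) then pair_cycle a b e.2 else [::].

Lemma edge_cycle_paired (C : {set 'I_m.+3}) (a b x : 'I_m.+3) :
  paired C a b -> x \in [set a; b] -> edge_cycle (x, C) = pair_cycle a b C.
Proof.
move=> pC xab; rewrite /edge_cycle; case: pickP => [[a' b'] /andP[pC' xab'] | /(_ (a, b))].
- by case: (paired_uniq pC pC' xab xab') => <- <-.
- by rewrite /= pC xab.
Qed.

Variables (a b : 'I_m.+3) (C : {set 'I_m.+3}).
Hypotheses (pC : paired C a b) (evC : ~~ odd #|C|).

Lemma simple_pair_cycle : simple_cycle (pair_cycle a b C).
Proof.
rewrite /pair_cycle; case E: toggle_pair => [[t t']|]; last exact: simple_exceptional_cycle.
by have [pCT evT] := toggle_pair_Some E pC; apply: simple_square_of.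
Qed.

Lemma pair_cycle_mem x : x \in [set a; b] -> (x, C) \in cycle_edges (pair_cycle a b C).
Proof.
move=> xab; rewrite /pair_cycle; case E: toggle_pair => [[t t']|].
  have [pCT evT] := toggle_pair_Some E pC.
  by rewrite square_of_edges //= xab set21.
have [a1 mb] := toggle_pair_None E.
have ab : a < b by case/andP: pC => /and4P[].
rewrite (paired_exceptional pC evC a1 mb) in xab *.
apply: simple_cycle_card2_edges => //; first exact: simple_exceptional_cycle.
- exact: exceptional_cycle_mem.
- by rewrite cards2 -val_eqE ltn_eqF.
Qed.

Lemma pair_cycle_const e : e \in cycle_edges (pair_cycle a b C) ->
  edge_cycle e = pair_cycle a b C.
Proof.
rewrite /pair_cycle; case E: toggle_pair => [[t t']|].
  have [pCT evT] := toggle_pair_Some E pC.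
  case: e => x S; rewrite square_of_edges //= => /andP[xab /set2P[]->].
  - by rewrite (edge_cycle_paired pC xab) /pair_cycle E.
  - by rewrite (edge_cycle_paired pCT xab) /pair_cycle E square_of_symdiff.
case: e => x S e_exc.
have /andP[_ /exceptional_cycle_sets[a' [b' [/= S_ab a'b' a'1 mb']]]] :=
  cycle_edges_vertices e_exc.
have := subsetP (simple_cycle_edges_sub (simple_exceptional_cycle m)) _ e_exc.
rewrite inE /= S_ab => /andP[_ xab].
rewrite (edge_cycle_paired (paired_set2 a'b') xab).
by rewrite /pair_cycle toggle_pair_exceptional.
Qed.

Lemma size_pair_cycle : size (pair_cycle a b C) <= cycle_bound m.
Proof.
rewrite /pair_cycle /cycle_bound /exceptional_cycle.
by case: toggle_pair => [[t t']|]; case: (m == 0).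
Qed.

End PairCycles.

Section EdgeCycles.
Variables (m : nat) (e : edge m.+3).
Hypothesis eG : e \in Gedges m.+3.

Lemma edge_cycle_pair : exists a b, [/\ paired e.2 a b, ~~ odd #|e.2|, e.1 \in [set a; b]
  & edge_cycle e = pair_cycle a b e.2].
Proof.
move: eG; rewrite !inE => /andP[/andP[evC _] xC].
have [a [b [pC xab]]] := paired_exists evC xC.
by exists a, b; split; rewrite -?(edge_cycle_paired pC xab) -?surjective_pairing.
Qed.

Lemma simple_edge_cycle : simple_cycle (edge_cycle e).
Proof. by have [a [b [pC evC _ ->]]] := edge_cycle_pair; apply: simple_pair_cycle. Qed.

Lemma edge_cycle_mem : e \in cycle_edges (edge_cycle e).
Proof.
have [a [b [pC evC xab ->]]] := edge_cycle_pair.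
by rewrite [e in e \in _]surjective_pairing; apply: pair_cycle_mem.
Qed.

Lemma edge_cycle_const e' :
  e' \in cycle_edges (edge_cycle e) -> edge_cycle e' = edge_cycle e.
Proof. by have [a [b [pC evC _ ->]]] := edge_cycle_pair; apply: pair_cycle_const. Qed.

Lemma clen_edge_cycle : clen (edge_cycle e) <= cycle_bound m.
Proof.
have [a [b [pC evC _ ->]]] := edge_cycle_pair.
exact: leq_trans (clen_le_size _) (size_pair_cycle _ _ _).
Qed.

End EdgeCycles.

Theorem corollary2 (n : nat) (hn : (3 <= n)%N) :
  exists sigma : seq (seq (vert n)),
    cycle_decomposition sigma /\
    (mu sigma <= 5 * log2 (INR n))%R /\
    (alpha sigma <= 5 * log2 (INR n))%R.
Proof.
case: n hn => [|[|[|m]]] // _.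
have [sigma [decomp mu_bound alpha_bound]] := canonical_cycles_decomposition
  (@simple_edge_cycle m) (@edge_cycle_mem m) (@edge_cycle_const m) (@clen_edge_cycle m).
exists sigma; split => //; split; apply: Rle_trans (cycle_bound_le_5log2 m).
- exact: mu_le.
- exact: alpha_le.
Qed.
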